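(* Let $G$ be an abelian group that is torsion-free or cyclic of prime order. Let $A=\{a_1,\dots,a_{n+1}\}\subsetneq G$ be a proper subset of $G$ with $n+1$ distinct elements, and define $A_i=-a_i+A=\{-a_i+a: a\in A\}$ for $i\in[n]$. If $A$ is not a progression, then $\bigcap_{i\in[n]}A_i=\{0\}$.
   Context: A progression of length $k$ with difference $x$ and initial term $a$ ($x,a\in G$) is a subset of $G$ of the form $\{a,a+x,a+2x,\dots,a+(k-1)x\}$. *)

From HB Require Import structures.
From mathcomp Require Import all_boot all_order all_algebra.
Set Implicit Arguments. Unset Strict Implicit. Unset Printing Implicit Defensive.
Import GRing.Theory.
Local Open Scope ring_scope.

Definition torsion_free (G : zmodType) : Prop :=
  forall (x : G) (m : nat), (0 < m)%N -> x *+ m = 0 -> x = 0.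

Definition cyclic_of_prime_order (G : zmodType) : Prop :=
  exists (p : nat) (g : G),
    [/\ prime p, g *+ p = 0, g != 0 & forall x : G, exists k : nat, x = g *+ k].

Definition progression (G : zmodType) (k : nat) (a x : G) : G -> Prop :=
  fun y => exists2 j : nat, (j < k)%N & y = a + x *+ j.

Definition is_progression (G : zmodType) (S : G -> Prop) : Prop :=
  exists (k : nat) (a x : G), forall y, S y <-> progression k a x y.

(* If y <> 0 lies in every A_i, then translation by y maps A \ {a_{n+1}} into A.
   In either kind of group no nonzero element is killed by a multiplier
   0 < d <= n + 1 (in the cyclic case because p = |G| > |A| = n + 1, A being
   proper), so a, a + y, ..., a + (n + 1) y are n + 2 distinct elements and the
   orbit of any a in A must leave A; it can only do so at a_{n+1}.  Hence every
   element of A is a_{n+1} - m y with 0 <= m <= n, and counting shows that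
   A = {a_{n+1} - n y, ..., a_{n+1}} is a progression. *)
From mathcomp Require Import all_boot all_order all_algebra.
Import GRing.Theory.
Set Implicit Arguments. Unset Strict Implicit. Unset Printing Implicit Defensive.
Local Open Scope ring_scope.

Section CyclicGroup.

Variables (G : zmodType) (p : nat) (g : G).
Hypothesis g_order : g *+ p = 0.
Hypothesis g_gen : forall x : G, exists k : nat, x = g *+ k.

Lemma mulrn_modn k : g *+ (k %% p) = g *+ k.
Proof. by rewrite {2}(divn_eq k p) mulrnDr mulnC mulrnA g_order mul0rn add0r. Qed.

Lemma card_le_cyclic (T : finType) (f : T -> G) :
  (0 < p)%N -> injective f -> (#|T| <= p)%N.
Proof.
move=> p_gt0 f_inj.
have exk x : exists k : nat, x == g *+ k by have [k ->] := g_gen x; exists k.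
pose ind (x : G) : 'I_p := Ordinal (ltn_pmod (xchoose (exk x)) p_gt0).
have indK x : g *+ ind x = x.
  by rewrite /= mulrn_modn; apply/esym/eqP/(xchooseP (exk x)).
have ind_inj : injective (ind \o f).
  by move=> s t /= /(congr1 (fun i : 'I_p => g *+ i)); rewrite !indK => /f_inj.
by rewrite -(card_ord p); apply: leq_card ind_inj.
Qed.

Lemma cyclic_prime_torsion (x : G) d :
  prime p -> (0 < d < p)%N -> x *+ d = 0 -> x = 0.
Proof.
move=> p_pr /andP[d_gt0 d_ltp] xd0.
have xp0 : x *+ p = 0.
  by have [k ->] := g_gen x; rewrite -mulrnA mulnC mulrnA g_order mul0rn.
have [u _ /dvdnP[c Bezout]] := Bezoutl d (prime_gt0 p_pr).
have /eqP coprime_pd : coprime p d by rewrite prime_coprime // gtnNdvd.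
have : x *+ (1 + u * d) = x *+ (c * p) by rewrite -coprime_pd Bezout.
by rewrite mulrnDr (mulnC u) mulrnA xd0 mul0rn addr0 mulnC mulrnA xp0 mul0rn.
Qed.

End CyclicGroup.

Lemma small_torsion_trivial (G : zmodType) n (a : 'I_n.+1 -> G) (g0 : G) :
  (torsion_free G \/ cyclic_of_prime_order G) ->
  injective a -> (forall j, a j <> g0) ->
  forall (x : G) d, (0 < d <= n.+1)%N -> x *+ d = 0 -> x = 0.
Proof.
move=> [tf|[p [g [p_pr g_order _ g_gen]]]] a_inj a_ne_g0 x d /andP[d_gt0 le_d].
  exact: tf.
pose b (o : option 'I_n.+1) := if o is Some j then a j else g0.
have b_inj : injective b.
  by case=> [?|] [?|] //= => [/a_inj->|/a_ne_g0|/esym/a_ne_g0].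
have := card_le_cyclic g_order g_gen (prime_gt0 p_pr) b_inj.
rewrite card_option card_ord => lt_np.
apply: cyclic_prime_torsion g_order g_gen _ _ p_pr _.
by rewrite d_gt0 (leq_ltn_trans le_d).
Qed.

Lemma mulrn_injle (G : zmodType) (y : G) N :
  (forall d, (0 < d <= N)%N -> y *+ d != 0) ->
  {in [pred m | m <= N]%N &, injective (GRing.natmul y)}.
Proof.
move=> y_order.
suff le_inj m1 m2 : (m1 <= m2 <= N)%N -> y *+ m1 = y *+ m2 -> m1 = m2.
  move=> m1 m2 le1 le2 e; case: (leqP m1 m2) => [le12|/ltnW le21].
    by apply: le_inj; rewrite ?le12.
  by apply/esym/le_inj; rewrite ?le21.
case/andP=> le12 le2N e; apply/eqP; rewrite eqn_leq le12 leqNgt; apply/negP => lt12.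
have: y *+ (m2 - m1) = 0.
  by apply: (@addrI _ (y *+ m1)); rewrite -mulrnDr subnKC // addr0 e.
by apply/eqP; rewrite y_order // subn_gt0 lt12 (leq_trans (leq_subr _ _)).
Qed.

Lemma ltn_ord_max n (i : 'I_n.+1) : (i < n)%N = (i != ord_max).
Proof. by rewrite ltn_neqAle -ltnS ltn_ord andbT. Qed.

Section TranslationClosed.

Variables (G : zmodType) (n : nat) (a : 'I_n.+1 -> G) (y : G).
Hypothesis a_inj : injective a.
Hypothesis y_order : forall d, (0 < d <= n.+1)%N -> y *+ d != 0.
Hypothesis a_shift : forall i : 'I_n.+1, (i < n)%N -> exists j, a j = a i + y.

Lemma orbit_in_range j m :
  (m <= n.+1)%N -> (forall k, (k < m)%N -> a j + y *+ k != a ord_max) ->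
  exists i, a i = a j + y *+ m.
Proof.
elim: m => [|m IHm] le_m avoid; first by exists j; rewrite addr0.
have [i ai] := IHm (ltnW le_m) (fun k lt_k => avoid k (ltnW lt_k)).
have [|i' ai'] := a_shift (i := i); last by exists i'; rewrite ai' ai mulrSr addrA.
by rewrite ltn_ord_max; apply: contra_neq (avoid m (ltnSn m)) => <-.
Qed.

Lemma orbit_hits_max j : [exists m : 'I_n.+1, a j + y *+ m == a ord_max].
Proof.
apply: contraT => /existsPn avoid.
have orbit (m : 'I_n.+2) : exists i, a i == a j + y *+ m.
  have [k lt_km|i ai] := orbit_in_range (j := j) (ltn_ord m).
    exact: (avoid (Ordinal (leq_trans lt_km (ltn_ord m)))).
  by exists i; rewrite ai.
pose f (m : 'I_n.+2) := xchoose (orbit m).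
have f_inj : injective f.
  move=> m1 m2 f12; apply/ord_inj/(mulrn_injle y_order (ltn_ord m1) (ltn_ord m2)).
  apply: (@addrI _ (a j)).
  rewrite -(eqP (xchooseP (orbit m1))) -(eqP (xchooseP (orbit m2))).
  by move: f12; rewrite /f => ->.
by have := leq_card f f_inj; rewrite !card_ord ltnn.
Qed.

Lemma sub_mulrn_shift (x : G) m : (m <= n)%N ->
  x - y *+ n + y *+ (n - m) = x - y *+ m.
Proof. by move=> le_m; rewrite -{1}(subnKC le_m) mulrnDr opprD addrA addrNK. Qed.

Lemma range_is_progression : is_progression (fun z : G => exists j, z = a j).
Proof.
pose phi j := xchoose (existsP (orbit_hits_max j)).
have phiE j : a j = a ord_max - y *+ phi j.
  by rewrite -(eqP (xchooseP (existsP (orbit_hits_max j)))) addrK.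
have phi_inj : injective phi.
  by move=> j1 j2 e; apply: a_inj; rewrite [a j1]phiE [a j2]phiE e.
have le_phi j : (phi j <= n)%N by rewrite -ltnS.
have [psi phiK psiK] := injF_bij phi_inj.
exists n.+1, (a ord_max - y *+ n), y => z; split.
  case=> j ->; exists (n - phi j)%N; first by rewrite ltnS leq_subr.
  by rewrite sub_mulrn_shift // [a j]phiE.
case=> t lt_t ->; have lt_nt : (n - t < n.+1)%N by rewrite ltnS leq_subr.
exists (psi (Ordinal lt_nt)); rewrite [a (psi _)]phiE psiK /=.
by rewrite -(sub_mulrn_shift (a ord_max) (leq_subr t n)) subKn // -ltnS.
Qed.

End TranslationClosed.

Theorem lemma3p11 (G : zmodType) (n : nat) (a : 'I_n.+1 -> G) :
  (torsion_free G \/ cyclic_of_prime_order G) ->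
  injective a ->
  (exists g : G, forall j, a j <> g) ->
  ~ is_progression (fun y : G => exists j, y = a j) ->
  forall y : G,
    (forall i : 'I_n.+1, (i < n)%N -> exists j : 'I_n.+1, y = - a i + a j) <-> y = 0.
Proof.
move=> G_tors a_inj [g0 a_ne_g0] not_prog y; split; last first.
  by move=> -> i _; exists i; rewrite addNr.
move=> y_common; apply/eqP/negPn/negP => y_ne0; apply: not_prog.
have y_order d : (0 < d <= n.+1)%N -> y *+ d != 0.
  move=> d_range; apply: contra_neq y_ne0.
  exact: (small_torsion_trivial G_tors a_inj a_ne_g0 (x := y) d_range).
apply: (range_is_progression a_inj y_order) => i /y_common[j ->].
by exists j; rewrite addNKr.
Qed.
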